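(* Let $T$ be a c.n.u. contraction on $H$ and $(f,g)\in\mathfrak{H}\oplus_\perp\mathfrak{H}$. Then $(f,g)\in\widehat{A_T}$ if and only if $g(\lambda)=\lambda f(\lambda)$ for each $\lambda\in\mathbb{D}_+$ and $\lambda g(\lambda)=f(\lambda)$ for each $\lambda\in\mathbb{D}_-$.
   Context: $H$ is an infinite-dimensional separable complex Hilbert space with inner product $(\cdot,\cdot)_H$; $T\in\mathbb{B}(H)$, $\|T\|\le1$, is completely non-unitary (no nonzero invariant subspace on which $T$ is unitary). $\mathbb{K}=\ker(I-T^*T)$. $\mathbb{H}=H\oplus_\perp H$ with $[(x_1,x_2),(y_1,y_2)]=i(x_1,y_1)_H-i(x_2,y_2)_H$; $S^{\perp_s}=\{a:[a,b]=0\ \forall b\in S\}$; $A_T=\{(x,Tx):x\in\mathbb{K}\}$. $\mathbb{D}_\pm$ are two copies of the open unit disc with centers $0_\pm$; for $\lambda\in\mathbb{D}_\pm$, $\bar\lambda$ is regarded as a point of $\mathbb{D}_\mp$. $N_\lambda=\{(x,\lambda x):x\in H\}\cap A_T^{\perp_s}$ for $\lambda\in\mathbb{D}_+$, $N_\lambda=\{(\lambda x,x):x\in H\}\cap A_T^{\perp_s}$ for $\lambda\in\mathbb{D}_-$. $E_\lambda=pr_1(N_\lambda)$ ($\lambda\in\mathbb{D}_+$), $E_\lambda=pr_2(N_\lambda)$ ($\lambda\in\mathbb{D}_-$), with $pr_i$ the projection of $\mathbb{H}$ onto the $i$-th copy of $H$. $F^\dagger_\lambda=E_{\bar\lambda}$,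 $F_\lambda$ = continuous conjugate-linear functionals on $F^\dagger_\lambda$. For $x\in H$, $\hat x(\lambda)\in F_\lambda$ is $\omega\mapsto(x,\omega)_H$. The map $x\mapsto\hat x$ is injective; $\mathfrak{H}=\{\hat x:x\in H\}$ with inner product $(\hat x,\hat y)_{\mathfrak{H}}=(x,y)_H$ (this is the reproducing kernel Hilbert space of sections of $F$ with kernel $K(\lambda,\mu)=\iota_\lambda^\dagger\iota_\mu$). For $S\subseteq\mathbb{H}$, $\hat S=\{(\hat x,\hat y):(x,y)\in S\}$. *)

From HB Require Import structures.
From mathcomp Require Import all_boot all_order all_algebra.
From mathcomp Require Import complex.
From mathcomp Require Import reals.
From mathcomp Require Import classical_sets.

Set Implicit Arguments.
Unset Strict Implicit.
Unset Printing Implicit Defensive.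

Import Order.TTheory GRing.Theory Num.Theory.
Local Open Scope ring_scope.
Local Open Scope classical_set_scope.

Section Hilbert.
Variables (R : realType) (H : lmodType R[i]) (ip : H -> H -> R[i]).

Definition is_inner_product :=
  [/\ (forall (a : R[i]) (x y z : H), ip (a *: x + y) z = a * ip x z + ip y z),
      (forall x y : H, ip y x = (ip x y)^*),
      (forall x : H, 0 <= ip x x) &
      (forall x : H, ip x x = 0 -> x = 0)].

Definition hnorm (x : H) : R[i] := sqrtC (ip x x).

Definition hconverges (u : nat -> H) (l : H) :=
  forall e : R[i], 0 < e -> exists N : nat, forall n, (N <= n)%N -> hnorm (u n - l) < e.

Definition hcauchy (u : nat -> H) :=
  forall e : R[i], 0 < e -> exists N : nat,
    forall m n, (N <= m)%N -> (N <= n)%N -> hnorm (u m - u n) < e.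

Definition hcomplete := forall u : nat -> H, hcauchy u -> exists l, hconverges u l.

Definition hseparable :=
  exists d : nat -> H, forall (x : H) (e : R[i]), 0 < e -> exists n, hnorm (x - d n) < e.

Definition hinfinite_dim :=
  forall n : nat, exists v : 'I_n -> H,
    forall i j : 'I_n, ip (v i) (v j) = (i == j)%:R.

Definition hilbert_space :=
  [/\ is_inner_product, hcomplete, hseparable & hinfinite_dim].

Definition hlinear (T : H -> H) :=
  forall (a : R[i]) (x y : H), T (a *: x + y) = a *: T x + T y.

Definition is_adjoint (T Tstar : H -> H) := forall x y : H, ip (T x) y = ip x (Tstar y).

Definition contraction (T : H -> H) := forall x : H, hnorm (T x) <= hnorm x.

Definition closed_subspace (M : set H) :=
  [/\ M 0,
      (forall (a : R[i]) (x y : H), M x -> M y -> M (a *: x + y)) &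
      (forall (u : nat -> H) (l : H), (forall n, M (u n)) -> hconverges u l -> M l)].

Definition cnu (T : H -> H) :=
  forall M : set H, closed_subspace M -> T @` M = M ->
    (forall x y, M x -> M y -> ip (T x) (T y) = ip x y) -> M = [set 0].

Definition Kset (T Tstar : H -> H) : set H := [set x | x - Tstar (T x) = 0].

Definition sform (a b : H * H) : R[i] := 'i * ip a.1 b.1 - 'i * ip a.2 b.2.

Definition s_orth (S : set (H * H)) : set (H * H) :=
  [set a | forall b, S b -> sform a b = 0].

Definition A_T (T Tstar : H -> H) : set (H * H) :=
  [set (x, T x) | x in Kset T Tstar].

(* points of D_+ (Dp z) and D_- (Dm z); membership in the disc is |z| < 1 *)
Inductive dpt := Dp of R[i] | Dm of R[i].

Definition in_disc (l : dpt) : Prop :=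
  match l with Dp z => `|z| < 1 | Dm z => `|z| < 1 end.

Definition dconj (l : dpt) : dpt :=
  match l with Dp z => Dm z^* | Dm z => Dp z^* end.

Definition N_ (T Tstar : H -> H) (l : dpt) : set (H * H) :=
  match l with
  | Dp z => [set a | exists x, a = (x, z *: x)] `&` s_orth (A_T T Tstar)
  | Dm z => [set a | exists x, a = (z *: x, x)] `&` s_orth (A_T T Tstar)
  end.

Definition E_ (T Tstar : H -> H) (l : dpt) : set H :=
  match l with
  | Dp _ => fst @` N_ T Tstar l
  | Dm _ => snd @` N_ T Tstar l
  end.

Definition Fdag (T Tstar : H -> H) (l : dpt) : set H := E_ T Tstar (dconj l).

(* A section of F: at each lambda, a conjugate-linear functional on F^dagger_lambda,
   represented by a function H -> R[i] whose values off F^dagger_lambda are irrelevant. *)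
Definition section := dpt -> H -> R[i].

Definition hat (x : H) : section := fun _ w => ip x w.

Definition sec_eq (T Tstar : H -> H) (f g : section) :=
  forall l w, Fdag T Tstar l w -> f l w = g l w.

Definition in_hat (T Tstar : H -> H) (S : set (H * H)) (fg : section * section) :=
  exists x y, S (x, y) /\ sec_eq T Tstar (hat x) fg.1 /\ sec_eq T Tstar (hat y) fg.2.

End Hilbert.

From HB Require Import structures.
From mathcomp Require Import all_boot all_order all_algebra.
From mathcomp Require Import complex reals classical_sets.
From mathcomp Require Import ring lra.

(* For k in K, the functionals of F†_λ are the w with (Tk, w) = λ (k, w) when
   λ ∈ D_+ and (k, w) = λ (Tk, w) when λ ∈ D_-; this is the forward direction
   for (x, y) = (k, Tk).
   Conversely, let D = I - T*T and D_* = I - TT*.  Testing the D_- condition at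
   λ = 0 against D²x, which is orthogonal to K, gives Dx = 0, i.e. x ∈ K.  For
   real 0 < r ≤ 1/2 the Neumann sums Σ rⁿ T*ⁿ D u and Σ rⁿ Tⁿ D_* u converge to
   points of F†_r on D_- and on D_+, so both conditions make y - Tx orthogonal to
   them; comparing power-series coefficients in r, y - Tx is orthogonal to all
   T*ⁿ D u and Tⁿ D_* u.  The orthogonal complement of these vectors is a closed
   subspace that T maps isometrically onto itself, hence 0 as T is completely
   non-unitary.
   Estimates go through the real part [rip] of the inner product; (x, y) = 0 is
   recovered from Re (x, y) = Re (x, i y) = 0. *)

Set Implicit Arguments.
Unset Strict Implicit.
Unset Printing Implicit Defensive.

Import Order.TTheory GRing.Theory Num.Theory.
Local Open Scope ring_scope.
Local Open Scope classical_set_scope.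

Section NullSequences.
Variable R : archiRealFieldType.

Definition null_seq (c : nat -> R) :=
  forall e : R, 0 < e -> exists N, forall n, (N <= n)%N -> `|c n| <= e.

Lemma null_seq_const (x : R) : null_seq (fun=> x) -> x = 0.
Proof.
move=> hx; apply/normr0_eq0/le_anti; rewrite normr_ge0 andbT.
by apply/ler_addgt0Pr => e /hx [N /(_ N (leqnn N))]; rewrite add0r.
Qed.

Lemma null_seqD (c d : nat -> R) :
  null_seq c -> null_seq d -> null_seq (fun n => c n + d n).
Proof.
move=> hc hd e e0; have e2 : 0 < e / 2 by rewrite divr_gt0.
have [N1 h1] := hc _ e2; have [N2 h2] := hd _ e2.
exists (maxn N1 N2) => n; rewrite geq_max => /andP[n1 n2].
by apply: le_trans (ler_normD _ _) _; rewrite [e]splitr lerD ?h1 ?h2.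
Qed.

Lemma null_seq_le (c d : nat -> R) (M : R) :
  (forall n, `|c n| <= M * `|d n|) -> null_seq d -> null_seq c.
Proof.
move=> hcd hd e e0; have M1 : 0 < `|M| + 1 by rewrite ltr_wpDl.
have [N hN] := hd _ (divr_gt0 e0 M1); exists N => n /hN hn.
apply: le_trans (hcd n) _; apply: le_trans (ler_wpM2r (normr_ge0 _) (ler_norm M)) _.
have -> : e = (`|M| + 1) * (e / (`|M| + 1)) by rewrite mulrC divfK ?gt_eqF.
have := normr_ge0 (d n); have := normr_ge0 M; nra.
Qed.

Lemma null_seq_expr (r : R) : 0 <= r -> r <= 1 / 2 -> null_seq (fun n => r ^+ n).
Proof.
move=> r0 r1 e e0; exists (Num.bound e^-1) => n hn.
have e1 : e^-1 < n%:R.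
  apply: lt_le_trans (archi_boundP _) _; first by rewrite invr_ge0 ltW.
  by rewrite ler_nat.
have n2 : n%:R <= 2 ^+ n :> R by rewrite -natrX ler_nat ltnW // ltn_expl.
have r2 : r ^+ n * 2 ^+ n <= 1.
  by rewrite -exprMn exprn_ile1 ?mulr_ge0 //; lra.
rewrite ger0_norm ?exprn_ge0 //.
have : 1 <= e * 2 ^+ n.
  have := lt_le_trans e1 n2; have := mulfV (lt0r_neq0 e0); nra.
have := exprn_ge0 n r0; nra.
Qed.

Lemma sum_expr_le2 (r : R) k : 0 <= r -> r <= 1 / 2 -> \sum_(i < k) r ^+ i <= 2.
Proof.
move=> r0 r1; elim: k => [|k IH]; first by rewrite big_ord0 ler0n.
rewrite big_ord_recl expr0.
under eq_bigr do rewrite exprS.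
rewrite -mulr_sumr.
have : r * \sum_(i < k) r ^+ i <= r * 2 by rewrite ler_wpM2l.
lra.
Qed.

Lemma geometric_tail_le (c : nat -> R) (C r : R) N k :
  0 <= r -> r <= 1 / 2 -> (forall i, `|c i| <= C) ->
  `|\sum_(i < k) r ^+ (N + i) * c i| <= 2 * C * r ^+ N.
Proof.
move=> r0 r1 hc; apply: le_trans (ler_norm_sum _ _ _) _.
have -> : 2 * C * r ^+ N = C * r ^+ N * 2 by ring.
apply: le_trans (_ : \sum_(i < k) C * r ^+ N * r ^+ i <= _).
  apply: ler_sum => i _; rewrite normrM ger0_norm ?exprn_ge0 // exprD.
  by rewrite mulrC -mulrA ler_wpM2r ?mulr_ge0 ?exprn_ge0.
rewrite -mulr_sumr ler_wpM2l ?sum_expr_le2 //.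
by rewrite mulr_ge0 ?exprn_ge0 // (le_trans _ (hc 0%N)).
Qed.

Lemma series_coef_eq0 (b : nat -> R) (C : R) :
  (forall n, `|b n| <= C) ->
  (forall r : R, 0 < r -> r <= 1 / 2 -> null_seq (fun N => \sum_(n < N) r ^+ n * b n)) ->
  forall n, b n = 0.
Proof.
move=> hb hnull; elim/ltn_ind => m IH.
(* Once b vanishes below m, the partial sums are r^m b_m up to 2 C r^(m+1). *)
have lead_le r : 0 < r -> r <= 1 / 2 -> r ^+ m * `|b m| <= 2 * C * r ^+ m.+1.
  move=> r0 r1; rewrite -subr_le0; apply/ler_addgt0Pr => e /(hnull r r0 r1) [N hN].
  have := hN (m.+1 + N)%N (leq_addl _ _).
  rewrite big_split_ord big_ord_recr /= big1 => [|i _]; last by rewrite IH ?mulr0.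
  rewrite !add0r; set tail := \sum_(i < N) _; move=> hsum.
  have htail : `|tail| <= 2 * C * r ^+ m.+1.
    exact: (geometric_tail_le (c := fun i => b (m.+1 + i)%N) _ _ (ltW r0) r1 (fun i => hb _)).
  have := ler_normB (r ^+ m * b m + tail) tail.
  by rewrite addrK normrM ger0_norm ?exprn_ge0 ?(ltW r0) //; lra.
have hb0 k : `|b m| <= C * `|(1 / 2 : R) ^+ k|.
  have h0 : (0 : R) < 1 / 2 by lra.
  have hk0 := exprn_ge0 k (ltW h0).
  have hk1 : (1 / 2 : R) ^+ k <= 1 by apply: exprn_ile1; lra.
  pose r : R := (1 / 2) ^+ k.+1.
  have r0 : 0 < r := exprn_gt0 _ h0.
  have r1 : r <= 1 / 2 by rewrite /r exprS; nra.
  have := lead_le r r0 r1.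
  rewrite (_ : 2 * C * r ^+ m.+1 = r ^+ m * (2 * C * r)); last by rewrite exprSr; ring.
  rewrite ler_pM2l ?exprn_gt0 // (ger0_norm hk0) /r exprS; lra.
apply: null_seq_const.
apply: (@null_seq_le (fun=> b m) _ C hb0); apply: null_seq_expr; lra.
Qed.

End NullSequences.

Lemma normc_real (R : rcfType) (r : R) : `|r%:C%C| = `|r|%:C%C :> R[i].
Proof. by rewrite normc_def /= expr0n /= addr0 sqrtr_sqr. Qed.

Section InnerProduct.
Variables (R : realType) (H : lmodType R[i]) (ip : H -> H -> R[i]).
Hypothesis ip_inner : is_inner_product ip.

Definition ip_left (z x : H) := ip x z.

HB.instance Definition _ z := GRing.isLinear.Build R[i] H R[i] *%R (ip_left z)
  (let: And4 h _ _ _ := ip_inner in fun a x y => h a x y z).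

Lemma ipC x y : ip y x = (ip x y)^*.
Proof. by case: ip_inner. Qed.

Lemma ip0l z : ip 0 z = 0. Proof. exact: (linear0 (ip_left z)). Qed.
Lemma ipDl x y z : ip (x + y) z = ip x z + ip y z.
Proof. exact: (linearD (ip_left z)). Qed.
Lemma ipBl x y z : ip (x - y) z = ip x z - ip y z.
Proof. exact: (linearB (ip_left z)). Qed.
Lemma ipZl a x z : ip (a *: x) z = a * ip x z.
Proof. by case: ip_inner => h _ _ _; rewrite -[a *: x]addr0 h ip0l addr0. Qed.

Lemma ip0r z : ip z 0 = 0. Proof. by rewrite ipC ip0l conjC0. Qed.
Lemma ipDr x y z : ip x (y + z) = ip x y + ip x z.
Proof. by rewrite ipC ipDl rmorphD /= -!ipC. Qed.
Lemma ipBr x y z : ip x (y - z) = ip x y - ip x z.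
Proof. by rewrite ipC ipBl rmorphB /= -!ipC. Qed.
Lemma ipZr a x y : ip x (a *: y) = a^* * ip x y.
Proof. by rewrite ipC ipZl rmorphM /= -ipC. Qed.

Definition rip x y := complex.Re (ip x y).

Lemma ripC x y : rip x y = rip y x.
Proof. by rewrite /rip ipC; case: (ip y x). Qed.
Lemma ripDl x y z : rip (x + y) z = rip x z + rip y z.
Proof. by rewrite /rip ipDl raddfD. Qed.
Lemma ripDr x y z : rip x (y + z) = rip x y + rip x z.
Proof. by rewrite ripC ripDl !(ripC x). Qed.
Lemma ripBl x y z : rip (x - y) z = rip x z - rip y z.
Proof. by rewrite /rip ipBl raddfB. Qed.
Lemma ripBr x y z : rip x (y - z) = rip x y - rip x z.
Proof. by rewrite ripC ripBl !(ripC x). Qed.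
Lemma ripZl (r : R) x y : rip (r%:C%C *: x) y = r * rip x y.
Proof. by rewrite /rip ipZl; case: (ip x y) => a b /=; ring. Qed.
Lemma ripZr (r : R) x y : rip x (r%:C%C *: y) = r * rip x y.
Proof. by rewrite ripC ripZl ripC. Qed.

Lemma ipxx x : ip x x = (rip x x)%:C%C.
Proof.
case: ip_inner => _ _ + _ => /(_ x); rewrite /rip lecE.
by case: (ip x x) => a b /= /andP[/eqP ->].
Qed.
Lemma rip_ge0 x : 0 <= rip x x.
Proof. by case: ip_inner => _ _ + _ => /(_ x); rewrite ipxx ler0c. Qed.
Lemma ipxx_eq0 x : ip x x = 0 -> x = 0.
Proof. by case: ip_inner => _ _ _; apply. Qed.

Lemma ip_eq0_rip x y : rip x y = 0 -> rip x ('i *: y) = 0 -> ip x y = 0.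
Proof. by rewrite /rip ipZr; case: (ip x y) => a b /= -> /=; simpc => ->. Qed.

Lemma rip_sqr_le x y : rip x y ^+ 2 <= rip x x * rip y y.
Proof.
have quad t : 0 <= rip x x - 2 * t * rip x y + t ^+ 2 * rip y y.
  suff -> : rip x x - 2 * t * rip x y + t ^+ 2 * rip y y =
            rip (x - t%:C%C *: y) (x - t%:C%C *: y) by exact: rip_ge0.
  by rewrite ripBl !ripBr !ripZl !ripZr (ripC y x); ring.
have yy0 := rip_ge0 y.
have [yy_eq0|yy_neq0] := eqVneq (rip y y) 0.
  have [->|xy_neq0] := eqVneq (rip x y) 0; first by rewrite expr0n /= mulr_ge0 ?rip_ge0.
  have := quad ((rip x x + 1) / (2 * rip x y)).
  have -> : 2 * ((rip x x + 1) / (2 * rip x y)) * rip x y = rip x x + 1.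
    by field; rewrite xy_neq0.
  rewrite yy_eq0 mulr0; lra.
have yy_gt0 : 0 < rip y y by rewrite lt_def yy_neq0.
have tE : rip x y / rip y y * rip y y = rip x y by rewrite divfK.
have := mulr_ge0 (ltW yy_gt0) (quad (rip x y / rip y y)).
move: tE; set t := rip x y / rip y y; nra.
Qed.

Definition rnorm x := Num.sqrt (rip x x).

Lemma rnorm_ge0 x : 0 <= rnorm x. Proof. exact: sqrtr_ge0. Qed.
Lemma rnorm_sqr x : rnorm x ^+ 2 = rip x x. Proof. by rewrite sqr_sqrtr ?rip_ge0. Qed.

Lemma hnormE x : hnorm ip x = (rnorm x)%:C%C.
Proof. by rewrite /hnorm ipxx -rnorm_sqr rmorphXn sqrCK // ler0c rnorm_ge0. Qed.

Lemma rip_le x y : `|rip x y| <= rnorm x * rnorm y.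
Proof.
rewrite -sqrtr_sqr /rnorm -sqrtrM ?rip_ge0 //; exact: ler_wsqrtr (rip_sqr_le x y).
Qed.

Lemma rnormD_le x y : rnorm (x + y) <= rnorm x + rnorm y.
Proof.
have hxy := le_trans (ler_norm _) (rip_le x y).
rewrite {1}/rnorm -[rnorm x + _]ger0_norm ?addr_ge0 ?rnorm_ge0 // -sqrtr_sqr.
apply: ler_wsqrtr; rewrite ripDl !ripDr (ripC y x) -!rnorm_sqr sqrrD mulr2n; lra.
Qed.

Lemma rnormZ (r : R) x : rnorm (r%:C%C *: x) = `|r| * rnorm x.
Proof. by rewrite /rnorm ripZl ripZr mulrA -expr2 sqrtrM ?sqr_ge0 // sqrtr_sqr. Qed.

Lemma rnormB x y : rnorm (x - y) = rnorm (y - x).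
Proof. by rewrite /rnorm !ripBl !ripBr (ripC x y); congr Num.sqrt; ring. Qed.

Lemma hconverges_null u l : hconverges ip u l -> null_seq (fun n => rnorm (u n - l)).
Proof.
move=> hu e e0; have [|N hN] := hu e%:C%C; first by rewrite ltcR.
by exists N => n /hN; rewrite hnormE ltcR ger0_norm ?rnorm_ge0 // => /ltW.
Qed.

Lemma hcauchy_of_null u (c : nat -> R) :
  null_seq c -> (forall N m, (N <= m)%N -> rnorm (u m - u N) <= c N) -> hcauchy ip u.
Proof.
move=> hc hu; case=> e a; rewrite ltcE /= => /andP[/eqP -> e0].
have [N hN] := hc (e / 3) (divr_gt0 e0 (ltr0n _ 3)).
exists N => m n hm hn; rewrite hnormE ltcR.
have -> : u m - u n = (u m - u N) + (u N - u n) by rewrite addrA subrK.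
have := rnormD_le (u m - u N) (u N - u n); rewrite (rnormB (u N)).
have := hN N (leqnn N); have := hu N m hm; have := hu N n hn; have := ler_norm (c N).
lra.
Qed.

Lemma rip_lim_eq0 u l v :
  hconverges ip u l -> null_seq (fun n => rip (u n) v) -> rip l v = 0.
Proof.
move=> hu hv; apply: null_seq_const.
apply: (null_seq_le (d := fun n => rip (l - u n) v + rip (u n) v) (M := 1)).
  by move=> n; rewrite ripBl subrK mul1r.
apply: null_seqD hv; apply: (null_seq_le (M := rnorm v) _ (hconverges_null hu)) => n.
by rewrite (ger0_norm (rnorm_ge0 _)) rnormB mulrC rip_le.
Qed.

Lemma ip_lim_eq0 u l w : hconverges ip u l -> (forall n, ip (u n) w = 0) -> ip l w = 0.
Proof.
move=> hu hw; apply: ip_eq0_rip; apply: (rip_lim_eq0 hu) => e e0; exists 0%N => n _.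
- by rewrite /rip hw normr0 ltW.
- by rewrite /rip ipZr hw mulr0 normr0 ltW.
Qed.

Lemma rnorm_sum_le (I : Type) (s : seq I) (F : I -> H) :
  rnorm (\sum_(i <- s) F i) <= \sum_(i <- s) rnorm (F i).
Proof.
apply: (big_ind2 (fun x y => rnorm x <= y)) => //.
- by rewrite /rnorm /rip ip0l sqrtr0.
- by move=> x1 x2 y1 y2 h1 h2; apply: le_trans (rnormD_le _ _) (lerD h1 h2).
Qed.

Definition neumann (V : H -> H) (r : R) (a : H) (N : nat) : H :=
  \sum_(n < N) (r ^+ n)%:C%C *: iter n V a.

Lemma neumann0 V r a : neumann V r a 0 = 0.
Proof. exact: big_ord0. Qed.

Lemma neumannS V r a N :
  neumann V r a N.+1 = neumann V r a N + (r ^+ N)%:C%C *: iter N V a.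
Proof. exact: big_ord_recr. Qed.

Section Neumann.
Variables (V : H -> H) (a : H).
Hypothesis V_contr : forall x, rnorm (V x) <= rnorm x.

Lemma rnorm_iter_le n : rnorm (iter n V a) <= rnorm a.
Proof. by elim: n => //= n IH; apply: le_trans (V_contr _) IH. Qed.

Lemma neumann_tail_le r N k : 0 <= r -> r <= 1 / 2 ->
  rnorm (neumann V r a (N + k) - neumann V r a N) <= 2 * rnorm a * r ^+ N.
Proof.
move=> r0 r1; rewrite /neumann big_split_ord /= addrC addrK.
apply: le_trans (rnorm_sum_le _ _) _.
have hc i : `|rnorm (iter (N + i) V a)| <= rnorm a.
  by rewrite (ger0_norm (rnorm_ge0 _)) rnorm_iter_le.
have := geometric_tail_le N k r0 r1 hc.
apply: le_trans; apply: le_trans (ler_norm _); apply: ler_sum => i _.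
by rewrite rnormZ ger0_norm ?exprn_ge0.
Qed.

Hypothesis ip_complete : hcomplete ip.

Lemma neumann_cvg r : 0 <= r -> r <= 1 / 2 -> exists w, hconverges ip (neumann V r a) w.
Proof.
move=> r0 r1; apply: ip_complete.
apply: (hcauchy_of_null (c := fun N => 2 * rnorm a * r ^+ N)).
  apply: (null_seq_le (M := 2 * rnorm a) _ (null_seq_expr r0 r1)) => n.
  by rewrite normrM ger0_norm // mulr_ge0 ?rnorm_ge0.
by move=> N m /subnKC <-; apply: neumann_tail_le.
Qed.

Lemma rip_neumann d r N :
  rip d (neumann V r a N) = \sum_(n < N) r ^+ n * rip d (iter n V a).
Proof.
elim: N => [|N IH]; first by rewrite neumann0 big_ord0 /rip ip0r.
by rewrite neumannS big_ord_recr ripDr ripZr IH.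
Qed.

Definition orth_neumann_limits d := forall r w, 0 < r -> r <= 1 / 2 ->
  hconverges ip (neumann V r a) w -> ip d w = 0.

Lemma rip_iter_of_neumann_orth d :
  orth_neumann_limits d -> forall n, rip d (iter n V a) = 0.
Proof.
move=> hd; apply: (series_coef_eq0 (C := rnorm d * rnorm a)) => [n|r r0 r1].
  exact: le_trans (rip_le _ _) (ler_wpM2l (rnorm_ge0 _) (rnorm_iter_le _)).
have [w hw] := neumann_cvg (ltW r0) r1.
have hw0 : rip d w = 0 by rewrite /rip (hd r w r0 r1 hw).
apply: (null_seq_le (M := rnorm d) _ (hconverges_null hw)) => N.
by rewrite -rip_neumann -[rip d _]subr0 -hw0 -ripBr (ger0_norm (rnorm_ge0 _)) rip_le.
Qed.

Lemma iter_orth_of_neumann_orth d :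
  orth_neumann_limits d -> forall n, ip d (iter n V a) = 0.
Proof.
move=> hd n; have hdi : orth_neumann_limits ('i *: d).
  by move=> r w r0 r1 hw; rewrite ipZl (hd r w r0 r1 hw) mulr0.
apply/eqP; rewrite ipC conjC_eq0; apply/eqP/ip_eq0_rip; rewrite ripC.
- exact: rip_iter_of_neumann_orth hd n.
- exact: rip_iter_of_neumann_orth hdi n.
Qed.

End Neumann.

Section Contraction.
Variables (T Tstar : H -> H).
Hypotheses (T_lin : hlinear T) (T_adj : is_adjoint ip T Tstar).

Lemma ip_inj_r x y : (forall z, ip z x = ip z y) -> x = y.
Proof.
by move=> h; apply/eqP; rewrite -subr_eq0; apply/eqP/ipxx_eq0; rewrite ipBr h subrr.
Qed.

Lemma adjointC x y : ip (Tstar x) y = ip x (T y).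
Proof. by rewrite ipC -T_adj -ipC. Qed.

Lemma Tstar_lin : hlinear Tstar.
Proof.
by move=> a x y; apply: ip_inj_r => z; rewrite -T_adj !ipDr !ipZr !T_adj.
Qed.

HB.instance Definition _ := GRing.isLinear.Build R[i] H H *:%R T T_lin.
HB.instance Definition _ := GRing.isLinear.Build R[i] H H *:%R Tstar Tstar_lin.

Definition defect x := x - Tstar (T x).
Definition codefect x := x - T (Tstar x).

Lemma ip_defectC x y : ip x (defect y) = ip (defect x) y.
Proof. by rewrite /defect ipBr ipBl adjointC T_adj. Qed.

Lemma ip_codefectC x y : ip x (codefect y) = ip (codefect x) y.
Proof. by rewrite /codefect ipBr ipBl T_adj adjointC. Qed.

Lemma KsetZ a k : Kset T Tstar k -> Kset T Tstar (a *: k).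
Proof. by rewrite /Kset /= !linearZ /= -scalerDr => ->; rewrite scaler0. Qed.

Lemma rip_adjoint x y : rip x (T y) = rip (Tstar x) y.
Proof. by rewrite /rip adjointC. Qed.

Lemma Tstar_codefect u : Tstar (codefect u) = defect (Tstar u).
Proof. by rewrite /codefect /defect linearB. Qed.

Lemma T_defect u : T (defect u) = codefect (T u).
Proof. by rewrite /codefect /defect linearB. Qed.

Lemma TstarT y : Tstar (T y) = y - defect y.
Proof. by rewrite /defect opprB addrC subrK. Qed.

Lemma TTstar y : T (Tstar y) = y - codefect y.
Proof. by rewrite /codefect opprB addrC subrK. Qed.

Lemma rip_defect_K x k : Kset T Tstar k -> rip (defect x) k = 0.
Proof. by move=> hk; rewrite /rip -ip_defectC /defect hk ip0r. Qed.

Hypothesis T_contr : contraction ip T.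

Lemma rnormT_le x : rnorm (T x) <= rnorm x.
Proof. by have := T_contr x; rewrite !hnormE lecR. Qed.

Lemma rnormTstar_le x : rnorm (Tstar x) <= rnorm x.
Proof.
have : rnorm (Tstar x) ^+ 2 <= rnorm (Tstar x) * rnorm x.
  rewrite rnorm_sqr -rip_adjoint ripC.
  apply: le_trans (le_trans (ler_norm _) (rip_le _ _)) _.
  by rewrite ler_wpM2r ?rnorm_ge0 ?rnormT_le.
have := rnorm_ge0 (Tstar x); have := rnorm_ge0 x; nra.
Qed.

Lemma s_orth_A_TP a :
  s_orth ip (A_T T Tstar) a <-> forall k, Kset T Tstar k -> ip a.1 k = ip a.2 (T k).
Proof.
split=> [h k hk | h _ [k hk <-]]; last by rewrite /sform /= h ?subrr.
have := h _ (ex_intro2 _ _ k hk erefl); rewrite /sform /= -mulrBr => /eqP.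
by rewrite mulf_eq0 (negbTE (neq0Ci _)) subr_eq0 => /eqP.
Qed.

Lemma Fdag_DpP z w :
  Fdag ip T Tstar (Dp z) w <-> forall k, Kset T Tstar k -> ip (T k) w = z * ip k w.
Proof.
split=> [[_ [[x ->] /s_orth_A_TP h] <-] k /h /= e | h].
  (* [N_] is elaborated with another instance path for the scalar action;
     [change] restores the one [ipZl] is stated with. *)
  change (ip (z^* *: x) k = ip x (T k)) in e.
  by rewrite ipC -e ipZl rmorphM /= conjCK -ipC.
exists (z^* *: w, w); last by [].
split; first by exists w.
apply/s_orth_A_TP => k hk /=; change (ip (z^* *: w) k = ip w (T k)).
by rewrite ipZl (ipC (T k)) h // rmorphM /= -ipC.
Qed.

Lemma Fdag_DmP z w :
  Fdag ip T Tstar (Dm z) w <-> forall k, Kset T Tstar k -> ip k w = z * ip (T k) w.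
Proof.
split=> [[_ [[x ->] /s_orth_A_TP h] <-] k /h /= e | h].
  change (ip x k = ip (z^* *: x) (T k)) in e.
  by rewrite ipC e ipZl rmorphM /= conjCK -ipC.
exists (w, z^* *: w); last by [].
split; first by exists w.
apply/s_orth_A_TP => k hk /=; change (ip w k = ip (z^* *: w) (T k)).
by rewrite ipZl (ipC k) h // rmorphM /= -ipC.
Qed.

Lemma ip_K_eq0 w (L : H -> H) : scalable L ->
  (forall k, Kset T Tstar k -> rip w (L k) = 0) ->
  forall k, Kset T Tstar k -> ip w (L k) = 0.
Proof. by move=> hL h k hk; apply: ip_eq0_rip; [exact: h | rewrite -hL; apply/h/KsetZ]. Qed.

Lemma rip_neumann_defect r u k N : Kset T Tstar k ->
  rip (neumann Tstar r (defect u) N) (k - r%:C%C *: T k) =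
  - (r ^+ N * rip (iter N Tstar (defect u)) k).
Proof.
move=> hk; elim: N => [|N IH].
  by rewrite neumann0 /= rip_defect_K // /rip ip0l mulr0 oppr0.
rewrite neumannS ripDl IH ripZl ripBr ripZr rip_adjoint /= exprS; ring.
Qed.

Lemma rip_neumann_codefect r u k N : Kset T Tstar k ->
  rip (neumann T r (codefect u) N.+1) (r%:C%C *: k - T k) =
  r ^+ N.+1 * rip (iter N T (codefect u)) k.
Proof.
move=> hk; elim: N => [|N IH].
  rewrite neumannS neumann0 add0r expr0 rmorph1 scale1r ripBr ripZr rip_adjoint.
  by rewrite Tstar_codefect rip_defect_K // subr0 expr1.
rewrite neumannS ripDl IH ripZl ripBr ripZr rip_adjoint /= TstarT ripBl rip_defect_K //.
rewrite subr0 !exprS; ring.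
Qed.

Lemma Fdag_Dm_neumann r u w : 0 < r -> r <= 1 / 2 ->
  hconverges ip (neumann Tstar r (defect u)) w -> Fdag ip T Tstar (Dm r%:C%C) w.
Proof.
move=> r0 r1 hw.
have rip_eq0 k : Kset T Tstar k -> rip w (k - r%:C%C *: T k) = 0.
  move=> hk; apply: (rip_lim_eq0 hw).
  apply: (null_seq_le (M := rnorm (defect u) * rnorm k) _ (null_seq_expr (ltW r0) r1)) => N.
  rewrite rip_neumann_defect // normrN normrM !(ger0_norm (exprn_ge0 _ (ltW r0))) mulrC.
  apply: ler_wpM2r; first exact: exprn_ge0 (ltW r0).
  apply: le_trans (rip_le _ _) (ler_wpM2r (rnorm_ge0 _) _).
  exact: rnorm_iter_le rnormTstar_le _.
have L_scalable : scalable (fun k => k - r%:C%C *: T k).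
  by move=> a v /=; rewrite [T _]linearZ scalerA mulrC -scalerA -scalerBr.
apply/Fdag_DmP => k hk; apply/eqP.
by rewrite -subr_eq0 -ipZl -ipBl ipC (ip_K_eq0 L_scalable rip_eq0) ?conjC0.
Qed.

Lemma Fdag_Dp_neumann r u w : 0 < r -> r <= 1 / 2 ->
  hconverges ip (neumann T r (codefect u)) w -> Fdag ip T Tstar (Dp r%:C%C) w.
Proof.
move=> r0 r1 hw.
have rip_eq0 k : Kset T Tstar k -> rip w (r%:C%C *: k - T k) = 0.
  move=> hk; apply: (rip_lim_eq0 hw).
  apply: (null_seq_le (M := rnorm (codefect u) * rnorm k) _ (null_seq_expr (ltW r0) r1)).
  case=> [|N].
    by rewrite neumann0 /rip ip0l normr0 mulr_ge0 ?normr_ge0 ?mulr_ge0 ?rnorm_ge0.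
  rewrite rip_neumann_codefect // normrM !(ger0_norm (exprn_ge0 _ (ltW r0))) mulrC.
  apply: ler_wpM2r; first exact: exprn_ge0 (ltW r0).
  apply: le_trans (rip_le _ _) (ler_wpM2r (rnorm_ge0 _) _).
  exact: rnorm_iter_le rnormT_le _.
have L_scalable : scalable (fun k => r%:C%C *: k - T k).
  by move=> a v /=; rewrite [T _]linearZ scalerA mulrC -scalerA -scalerBr.
apply/Fdag_DpP => k hk; apply/eqP.
by rewrite eq_sym -subr_eq0 -ipZl -ipBl ipC (ip_K_eq0 L_scalable rip_eq0) ?conjC0.
Qed.

Definition unitary_part : set H := [set h | forall n u,
  ip h (iter n Tstar (defect u)) = 0 /\ ip h (iter n T (codefect u)) = 0].

Lemma unitary_part_closed : closed_subspace ip unitary_part.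
Proof.
split=> [n u | a x y hx hy n u | v l hv hl n u].
- by rewrite !ip0l.
- have [x1 x2] := hx n u; have [y1 y2] := hy n u.
  by rewrite !ipDl !ipZl x1 x2 y1 y2 mulr0 addr0.
- by split; apply: (ip_lim_eq0 hl) => m; have [] := hv m n u.
Qed.

Lemma unitary_part_defect h : unitary_part h -> defect h = 0.
Proof. by move=> /(_ 0%N (defect h)) [/= + _]; rewrite ip_defectC => /ipxx_eq0. Qed.

Lemma unitary_part_codefect h : unitary_part h -> codefect h = 0.
Proof. by move=> /(_ 0%N (codefect h)) [_ /=]; rewrite ip_codefectC => /ipxx_eq0. Qed.

Lemma unitary_part_T h : unitary_part h -> unitary_part (T h).
Proof.
move=> hh n u; rewrite !T_adj; split; first exact: (hh n.+1 u).1.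
case: n => [|n] /=; first by rewrite Tstar_codefect; exact: (hh 0%N (Tstar u)).1.
by rewrite TstarT ipBr (hh n u).2 ip_defectC unitary_part_defect // ip0l subr0.
Qed.

Lemma unitary_part_Tstar h : unitary_part h -> unitary_part (Tstar h).
Proof.
move=> hh n u; rewrite !adjointC; split; last exact: (hh n.+1 u).2.
case: n => [|n] /=; first by rewrite T_defect; exact: (hh 0%N (T u)).2.
by rewrite TTstar ipBr (hh n u).1 ip_codefectC unitary_part_codefect // ip0l subr0.
Qed.

Definition Dp_relation x y := forall z : R[i], `|z| < 1 ->
  forall w, Fdag ip T Tstar (Dp z) w -> ip y w = z * ip x w.

Definition Dm_relation x y := forall z : R[i], `|z| < 1 ->
  forall w, Fdag ip T Tstar (Dm z) w -> z * ip y w = ip x w.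

Lemma relations_graph k : Kset T Tstar k -> Dp_relation k (T k) /\ Dm_relation k (T k).
Proof.
move=> hk; split=> z _ w hw; first exact: (Fdag_DpP _ _).1 hw k hk.
by rewrite ((Fdag_DmP _ _).1 hw k hk).
Qed.

Lemma Kset_of_Dm_relation x y : Dm_relation x y -> Kset T Tstar x.
Proof.
move=> hQ; have hw : Fdag ip T Tstar (Dm 0) (defect (defect x)).
  by apply/Fdag_DmP => k hk; rewrite mul0r ip_defectC /defect hk ip0l.
have := hQ 0 _ _ hw; rewrite normr0 ltr01 mul0r ip_defectC => /(_ isT) /esym.
exact: ipxx_eq0.
Qed.

Hypothesis T_cnu : cnu ip T.

Lemma unitary_part_eq0 : unitary_part = [set 0].
Proof.
apply: T_cnu; first exact: unitary_part_closed.
  apply/seteqP; split=> [_ [x hx <-]|h hh]; first exact: unitary_part_T.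
  exists (Tstar h); first exact: unitary_part_Tstar.
  by rewrite TTstar unitary_part_codefect ?subr0.
by move=> x y hx hy; rewrite T_adj TstarT ipBr unitary_part_defect // ip0r subr0.
Qed.

Hypothesis ip_complete : hcomplete ip.

Lemma eq_T_of_relations x y :
  Kset T Tstar x -> Dp_relation x y -> Dm_relation x y -> y = T x.
Proof.
move=> hx hP hQ; apply/eqP; rewrite -subr_eq0; apply/eqP.
suff : unitary_part (y - T x) by rewrite unitary_part_eq0.
have r_small r : 0 < r -> r <= 1 / 2 -> `|r%:C%C| < 1 :> R[i].
  by move=> r0 r1; rewrite normc_real ltcR ger0_norm ?(ltW r0) //; lra.
move=> n u; split.
  apply: (iter_orth_of_neumann_orth rnormTstar_le ip_complete) => r w r0 r1 hw.
  have hF := Fdag_Dm_neumann r0 r1 hw.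
  have r_neq0 : r%:C%C != 0 :> R[i] by rewrite fmorph_eq0 gt_eqF.
  apply/eqP; rewrite ipBl subr_eq0; apply/eqP/(mulfI r_neq0).
  by rewrite (hQ r%:C%C) ?r_small // ((Fdag_DmP _ _).1 hF x hx).
apply: (iter_orth_of_neumann_orth rnormT_le ip_complete) => r w r0 r1 hw.
have hF := Fdag_Dp_neumann r0 r1 hw.
by rewrite ipBl (hP r%:C%C) ?r_small // ((Fdag_DpP _ _).1 hF x hx) subrr.
Qed.

End Contraction.

End InnerProduct.

Theorem proposition4p10 (R : realType) (H : lmodType R[i]) (ip : H -> H -> R[i])
  (T Tstar : H -> H) :
  hilbert_space ip -> hlinear T -> is_adjoint ip T Tstar ->
  contraction ip T -> cnu ip T ->
  forall x y : H,
    in_hat ip T Tstar (A_T T Tstar) (hat ip x, hat ip y) <->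
    ((forall z : R[i], `|z| < 1 -> forall w, Fdag ip T Tstar (Dp z) w ->
        hat ip y (Dp z) w = z * hat ip x (Dp z) w) /\
     (forall z : R[i], `|z| < 1 -> forall w, Fdag ip T Tstar (Dm z) w ->
        z * hat ip y (Dm z) w = hat ip x (Dm z) w)).
Proof.
move=> [ip_inner ip_complete _ _] T_lin T_adj T_contr T_cnu x y; split.
  case=> _ [_ [[k hk [<- <-]] [hx hy]]].
  have [hP hQ] := relations_graph ip_inner hk.
  split=> z hz w hw; move: (hx _ _ hw) (hy _ _ hw); rewrite /hat /= => <- <-.
    exact: hP.
  exact: hQ.
case=> hP hQ; have hx := Kset_of_Dm_relation ip_inner T_adj hQ.
rewrite (eq_T_of_relations ip_inner T_lin T_adj T_contr T_cnu ip_complete hx hP hQ).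
by exists x, (T x); split; first by exists x.
Qed.
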